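(* Let $\mathcal C$ be a pseudo-purifiable discard category, let $(A_i)_{i\ge1}$, $(B_i)_{i\ge1}$ be sequences of objects, and let $(f_k)_{k\ge1}$ with $f_k\in\mathcal C(A_1\otimes\cdots\otimes A_k,B_1\otimes\cdots\otimes B_k)$ be a monotone and regular sequence. Then there exists a regular stateful morphism sequence $\alpha$ over $\mathcal C$ with inputs $(A_i)$ and outputs $(B_i)$ such that $\mathrm{FA}_k(\alpha)=f_k$ for all $k\ge1$. (That is, the functor $\mathrm{FA}$ from regular stateful morphism sequences to finite approximation sequences is full.)
   Context: Monoidal categories are treated as strict; $\sigma$ is the symmetry; write $\hat A_k=A_1\otimes\cdots\otimes A_k$. A discard category is a symmetric monoidal category with, for each object $A$, $\top_A:A\to I$ with $\top_I=\mathrm{id}_I$, $\top_{A\otimes B}=\top_A\otimes\top_B$; $f$ is causal if $\top\circ f=\top$. For $f,g\in\mathcal C(A,B)$, $f\preceq g$ iff there are $X$, $g_0\in\mathcal C(A,B\otimes X)$, $f_0\in\mathcal C(X,I)$ with $f=(\mathrm{id}_B\otimes f_0)\circ g_0$ and $g=(\mathrm{id}_B\otimes\top_X)\circ g_0$. $p\in\mathcal C(A,B\otimes X)$ is a pseudo-purification of $f\in\mathcal C(A,B)$ ($p\in\mathrm{Pure}(f)$) if for every $Y$ and $g\in\mathcal C(A,B\otimes Y)$ with $f=(\mathrm{id}_B\otimes\top_Y)\circ g$ there is a causal $c\in\mathcal C(X,Y)$ with $g=(\mathrm{id}_B\otimes c)\circ p$. Pseudo-purifiable: every morphism has a pseudo-purification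 and, for $f_1\in\mathcal C(A_1,B_1\otimes C)$, $f_2\in\mathcal C(C\otimes A_2,B_2)$, $p_1\in\mathrm{Pure}(f_1)$, $p_1:A_1\to B_1\otimes C\otimes X_1$, $p_2\in\mathrm{Pure}(f_2)$, $p_2:C\otimes A_2\to B_2\otimes X_2$, the morphism $(\mathrm{id}_{B_1\otimes B_2}\otimes\sigma_{X_2,X_1})\circ(\mathrm{id}_{B_1}\otimes p_2\otimes\mathrm{id}_{X_1})\circ(\mathrm{id}_{B_1\otimes C}\otimes\sigma_{X_1,A_2})\circ(p_1\otimes\mathrm{id}_{A_2})$ is in $\mathrm{Pure}((\mathrm{id}_{B_1}\otimes f_2)\circ(f_1\otimes\mathrm{id}_{A_2}))$. The sequence $(f_k)$ is monotone if for every $k\ge1$: $(\mathrm{id}_{\hat B_k}\otimes\top_{B_{k+1}})\circ f_{k+1}\preceq f_k\otimes\top_{A_{k+1}}$. It is regular if there exist $n\ge1$, objects $A',B',M$ with $A_k=A'$ and $B_k=B'$ for all $k>n$, and morphisms $g^{\mathrm{irreg}}\in\mathcal C(\hat A_n,\hat B_n\otimes M)$, $g^{\mathrm{reg}}\in\mathcal C(M\otimes A',B'\otimes M)$ such that, setting $\Psi_n=g^{\mathrm{irreg}}$ and $\Psi_{k+1}=(\mathrm{id}_{\hat B_k}\otimes g^{\mathrm{reg}})\circ(\Psi_k\otimes\mathrm{id}_{A_{k+1}})$, we have $f_k=(\mathrm{id}_{\hat B_k}\otimes\top_M)\circ\Psi_k$ for all $k\ge n$. A stateful morphism sequence $\alpha$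 consists of objects $(A_i)_{i\ge1},(B_i)_{i\ge1},(M_i)_{i\ge0}$ with $M_0=I$ and layers $\alpha_i\in\mathcal C(A_i\otimes M_{i-1},B_i\otimes M_i)$; it is regular if there is $n$ with $A_k=A_n,B_k=B_n,M_k=M_n,\alpha_k=\alpha_n$ for all $k\ge n$. With $\Phi_1=\alpha_1$ and $\Phi_{k+1}=(\mathrm{id}_{\hat B_k}\otimes\alpha_{k+1})\circ(\mathrm{id}_{\hat B_k}\otimes\sigma_{M_k,A_{k+1}})\circ(\Phi_k\otimes\mathrm{id}_{A_{k+1}})$, set $\mathrm{FA}_k(\alpha)=(\mathrm{id}_{\hat B_k}\otimes\top_{M_k})\circ\Phi_k$. *)

(* Strict symmetric monoidal (discard)
   categories in the one-sorted ("arrows-only") presentation: a type of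
   objects, a type of morphisms with domain/codomain maps; composition and
   the other operations are total functions whose axioms are required only
   on well-typed arguments.  This avoids transports along the (propositional)
   strictness equalities of objects. *)
Set Implicit Arguments.

Record DiscardCat := {
  Ob : Type;
  Mor : Type;
  dom : Mor -> Ob;
  cod : Mor -> Ob;
  idm : Ob -> Mor;
  comp : Mor -> Mor -> Mor;          (* comp g f = g o f *)
  unitO : Ob;
  tO : Ob -> Ob -> Ob;
  tM : Mor -> Mor -> Mor;
  sig : Ob -> Ob -> Mor;
  top : Ob -> Mor;
  dom_id : forall A, dom (idm A) = A;
  cod_id : forall A, cod (idm A) = A;
  dom_comp : forall f g, cod f = dom g -> dom (comp g f) = dom f;
  cod_comp : forall f g, cod f = dom g -> cod (comp g f) = cod g;
  comp_id_l : forall f, comp (idm (cod f)) f = f;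
  comp_id_r : forall f, comp f (idm (dom f)) = f;
  comp_assoc : forall f g h, cod f = dom g -> cod g = dom h ->
      comp h (comp g f) = comp (comp h g) f;
  tO_assoc : forall A B C, tO (tO A B) C = tO A (tO B C);
  tO_unit_l : forall A, tO unitO A = A;
  tO_unit_r : forall A, tO A unitO = A;
  dom_tM : forall f g, dom (tM f g) = tO (dom f) (dom g);
  cod_tM : forall f g, cod (tM f g) = tO (cod f) (cod g);
  tM_id : forall A B, tM (idm A) (idm B) = idm (tO A B);
  tM_comp : forall f g f' g', cod f = dom g -> cod f' = dom g' ->
      tM (comp g f) (comp g' f') = comp (tM g g') (tM f f');
  tM_assoc : forall f g h, tM (tM f g) h = tM f (tM g h);
  tM_unit_l : forall f, tM (idm unitO) f = f;
  tM_unit_r : forall f, tM f (idm unitO) = f;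
  dom_sig : forall A B, dom (sig A B) = tO A B;
  cod_sig : forall A B, cod (sig A B) = tO B A;
  sig_nat : forall f g,
      comp (sig (cod f) (cod g)) (tM f g) = comp (tM g f) (sig (dom f) (dom g));
  sig_inv : forall A B, comp (sig B A) (sig A B) = idm (tO A B);
  sig_hex : forall A B C,
      sig A (tO B C) = comp (tM (idm B) (sig A C)) (tM (sig A B) (idm C));
  dom_top : forall A, dom (top A) = A;
  cod_top : forall A, cod (top A) = unitO;
  top_unit : top unitO = idm unitO;
  top_tO : forall A B, top (tO A B) = tM (top A) (top B)
}.

Section Defs.
Variable C : DiscardCat.

Definition hom (f : Mor C) (A B : Ob C) : Prop := dom C f = A /\ cod C f = B.

Definition causal (A B : Ob C) (c : Mor C) : Prop :=
  comp C (top C B) c = top C A.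

Definition preceq (A B : Ob C) (f g : Mor C) : Prop :=
  exists (X : Ob C) (g0 f0 : Mor C),
    hom g0 A (tO C B X) /\ hom f0 X (unitO C) /\
    f = comp C (tM C (idm C B) f0) g0 /\
    g = comp C (tM C (idm C B) (top C X)) g0.

Definition Pure (A B X : Ob C) (f p : Mor C) : Prop :=
  hom p A (tO C B X) /\
  forall (Y : Ob C) (g : Mor C), hom g A (tO C B Y) ->
    f = comp C (tM C (idm C B) (top C Y)) g ->
    exists c : Mor C, hom c X Y /\ causal X Y c /\
      g = comp C (tM C (idm C B) c) p.

Definition pseudo_purifiable : Prop :=
  (forall (A B : Ob C) (f : Mor C), hom f A B ->
     exists (X : Ob C) (p : Mor C), Pure A B X f p) /\
  (forall (A1 B1 Cc A2 B2 X1 X2 : Ob C) (f1 f2 p1 p2 : Mor C),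
     hom f1 A1 (tO C B1 Cc) -> hom f2 (tO C Cc A2) B2 ->
     Pure A1 (tO C B1 Cc) X1 f1 p1 ->
     Pure (tO C Cc A2) B2 X2 f2 p2 ->
     Pure (tO C A1 A2) (tO C B1 B2) (tO C X1 X2)
       (comp C (tM C (idm C B1) f2) (tM C f1 (idm C A2)))
       (comp C (tM C (idm C (tO C B1 B2)) (sig C X2 X1))
         (comp C (tM C (tM C (idm C B1) p2) (idm C X1))
           (comp C (tM C (idm C (tO C B1 Cc)) (sig C X1 A2))
             (tM C p1 (idm C A2)))))).

(* hat A k = A_1 (x) ... (x) A_k  (hat A 0 = I); index 0 of A is unused *)
Fixpoint hat (A : nat -> Ob C) (k : nat) : Ob C :=
  match k with
  | 0 => unitO C
  | S k' => tO C (hat A k') (A (S k'))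
  end.

Definition monotone (A B : nat -> Ob C) (f : nat -> Mor C) : Prop :=
  forall k, 1 <= k ->
    preceq (hat A (S k)) (hat B k)
      (comp C (tM C (idm C (hat B k)) (top C (B (S k)))) (f (S k)))
      (tM C (f k) (top C (A (S k)))).

(* psi_seq ... m = Psi_{n+m} *)
Fixpoint psi_seq (A B : nat -> Ob C) (n : nat) (girr greg : Mor C) (m : nat)
  : Mor C :=
  match m with
  | 0 => girr
  | S m' => comp C (tM C (idm C (hat B (n + m'))) greg)
                   (tM C (psi_seq A B n girr greg m') (idm C (A (S (n + m')))))
  end.

Definition regular_seq (A B : nat -> Ob C) (f : nat -> Mor C) : Prop :=
  exists (n : nat) (A' B' M : Ob C) (girr greg : Mor C),
    1 <= n /\
    (forall k, n < k -> A k = A' /\ B k = B') /\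
    hom girr (hat A n) (tO C (hat B n) M) /\
    hom greg (tO C M A') (tO C B' M) /\
    (forall k, n <= k ->
       f k = comp C (tM C (idm C (hat B k)) (top C M)) (psi_seq A B n girr greg (k - n))).

(* stateful morphism sequence with inputs A, outputs B, memories M, layers alpha *)
Definition stateful (A B M : nat -> Ob C) (alpha : nat -> Mor C) : Prop :=
  M 0 = unitO C /\
  forall i, 1 <= i -> hom (alpha i) (tO C (A i) (M (i - 1))) (tO C (B i) (M i)).

Definition regular_stateful (A B M : nat -> Ob C) (alpha : nat -> Mor C) : Prop :=
  exists n, 1 <= n /\ forall k, n <= k ->
    A k = A n /\ B k = B n /\ M k = M n /\ alpha k = alpha n.

(* phi_seq ... m = Phi_{m+1} *)
Fixpoint phi_seq (A B M : nat -> Ob C) (alpha : nat -> Mor C) (m : nat) : Mor C :=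
  match m with
  | 0 => alpha 1
  | S m' =>
      comp C (tM C (idm C (hat B (S m'))) (alpha (S (S m'))))
        (comp C (tM C (idm C (hat B (S m'))) (sig C (M (S m')) (A (S (S m')))))
           (tM C (phi_seq A B M alpha m') (idm C (A (S (S m'))))))
  end.

Definition Phi (A B M : nat -> Ob C) (alpha : nat -> Mor C) (k : nat) : Mor C :=
  phi_seq A B M alpha (k - 1).

Definition FA (A B M : nat -> Ob C) (alpha : nat -> Mor C) (k : nat) : Mor C :=
  comp C (tM C (idm C (hat B k)) (top C (M k))) (Phi A B M alpha k).

End Defs.

Arguments hom {C} f A B.
Arguments causal {C} A B c.
Arguments preceq {C} A B f g.
Arguments Pure {C} A B X f p.
Arguments hat {C} A k.
Arguments monotone {C} A B f.
Arguments psi_seq {C} A B n girr greg m.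
Arguments regular_seq {C} A B f.
Arguments stateful {C} A B M alpha.
Arguments regular_stateful {C} A B M alpha.
Arguments phi_seq {C} A B M alpha m.
Arguments Phi {C} A B M alpha k.
Arguments FA {C} A B M alpha k.

(* A dilation of f : A -> B with environment X is a D : A -> B (x) X with
   (id (x) top_X) o D = f.  The heart of the proof is a one-step splitting
   lemma: if (f_k) is monotone, every dilation D of f_(k+1) factors as
   D = (id (x) g) o (p (x) id) with p a dilation of f_k and g a layer
   W (x) A_(k+1) -> B_(k+1) (x) N.  It is obtained by purifying f_k as p,
   noting that p (x) id purifies f_k (x) top, so by monotonicity the
   partially discarded f_(k+1) equals (id (x) h) o (p (x) id) for an effect h;
   purifying p and h and using the sequential purification axiom yields a
   purification of that composite through which D factors.
   Iterating the splitting backwards from the dilation Psi_n of f_n given by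
   regularity builds the first n layers (their finite approximations are
   f_1..f_n and their composite is Psi_n); appending the regular layer
   g_reg forever makes Phi_k = Psi_k for every k >= n, hence FA_k = f_k. *)

From Stdlib Require Import Lia PeanoNat.

Section Realization.
Variable C : DiscardCat.
Local Notation cp := (comp C).
Local Notation tm := (tM C).
Local Notation id := (idm C).
Local Notation to := (tO C).
Local Notation I := (unitO C).
Local Notation tp := (top C).
Local Notation sg := (sig C).

(* Routine typing side conditions: normalise domains and codomains of composite
   morphisms and compare the resulting objects up to strict associativity/units. *)
Ltac onorm := repeat rewrite ?tO_assoc, ?tO_unit_l, ?tO_unit_r.

Ltac dcstep :=
  match goal with
  | |- context [dom C (idm C _)] => rewrite dom_id
  | |- context [cod C (idm C _)] => rewrite cod_id
  | |- context [dom C (tM C _ _)] => rewrite dom_tM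
  | |- context [cod C (tM C _ _)] => rewrite cod_tM
  | |- context [dom C (sig C _ _)] => rewrite dom_sig
  | |- context [cod C (sig C _ _)] => rewrite cod_sig
  | |- context [dom C (top C _)] => rewrite dom_top
  | |- context [cod C (top C _)] => rewrite cod_top
  | H : dom C ?f = _ |- context [dom C ?f] => rewrite H
  | H : cod C ?f = _ |- context [cod C ?f] => rewrite H
  | |- context [dom C (comp C ?g ?f)] => rewrite (dom_comp C f g) by dcsolve
  | |- context [cod C (comp C ?g ?f)] => rewrite (cod_comp C f g) by dcsolve
  end
with dcsolve := repeat dcstep; onorm; reflexivity.

Lemma comp_id_idem X : cp (id X) (id X) = id X.
Proof. pose proof (comp_id_l C (id X)) as H. rewrite cod_id in H. exact H. Qed.

Lemma comp_id_left f X : cod C f = X -> cp (id X) f = f.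
Proof. intros <-. apply comp_id_l. Qed.

Lemma comp_id_right f X : dom C f = X -> cp f (id X) = f.
Proof. intros <-. apply comp_id_r. Qed.

Lemma whisker_comp X g g' : cod C g' = dom C g ->
  cp (tm (id X) g) (tm (id X) g') = tm (id X) (cp g g').
Proof. intro H. rewrite <- tM_comp by dcsolve. now rewrite comp_id_idem. Qed.

Lemma top_tensor_split a b : cp (tp a) (tm (id a) (tp b)) = tp (to a b).
Proof.
  rewrite top_tO.
  assert (E : tp a = tm (tp a) (id I)) by now rewrite tM_unit_r.
  rewrite E at 1. rewrite <- tM_comp by dcsolve.
  rewrite comp_id_right by dcsolve. rewrite comp_id_left by dcsolve. reflexivity.
Qed.

Lemma discard_twice Bh a b P : cod C P = to (to Bh a) b ->
  cp (tm (id Bh) (tp a)) (cp (tm (id (to Bh a)) (tp b)) P)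
  = cp (tm (id Bh) (tp (to a b))) P.
Proof.
  intro HP. rewrite comp_assoc by dcsolve.
  rewrite <- (tM_id C Bh a), tM_assoc, whisker_comp by dcsolve.
  now rewrite top_tensor_split.
Qed.

(* The swap built into the recursion of Phi cancels against a layer that is
   precomposed with the inverse swap. *)
Lemma swap_cancel Bh a W g P : dom C g = to W a -> cod C P = to Bh W ->
  cp (tm (id Bh) (cp g (sg a W))) (cp (tm (id Bh) (sg W a)) (tm P (id a)))
  = cp (tm (id Bh) g) (tm P (id a)).
Proof.
  intros Hg HP. rewrite comp_assoc, whisker_comp by dcsolve.
  rewrite <- comp_assoc by dcsolve.
  now rewrite sig_inv, comp_id_right by dcsolve.
Qed.

Lemma layer_hom g a W b N :
  hom g (to W a) (to b N) -> hom (cp g (sg a W)) (to a W) (to b N).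
Proof. intros [Hd Hc]. split; dcsolve. Qed.

Definition dilation (A0 B0 X : Ob C) (f D : Mor C) : Prop :=
  hom D A0 (to B0 X) /\ cp (tm (id B0) (tp X)) D = f.

Lemma dilation_env_tensor {A0 B0 Z X f p D} :
  hom D A0 (to (to B0 Z) X) -> cp (tm (id (to B0 Z)) (tp X)) D = p ->
  cp (tm (id B0) (tp Z)) p = f -> dilation A0 B0 (to Z X) f D.
Proof.
  intros [Hd Hc] Hp Hf. split.
  - split; [exact Hd | rewrite Hc; apply tO_assoc].
  - rewrite <- Hf, <- Hp. symmetry. now apply discard_twice.
Qed.

Lemma pure_universal {A0 B0 X Y f p D} :
  Pure A0 B0 X f p -> dilation A0 B0 Y f D ->
  exists c, hom c X Y /\ D = cp (tm (id B0) c) p.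
Proof.
  intros [_ Hp] [HD Ef]. destruct (Hp Y D HD (eq_sym Ef)) as (c & Hc & _ & E).
  now exists c.
Qed.

(* A pseudo-purification is itself a dilation: compare it with the trivial
   dilation f and use that causal effects are discards. *)
Lemma pure_dilation {A0 B0 X f p} :
  Pure A0 B0 X f p -> hom f A0 B0 -> dilation A0 B0 X f p.
Proof.
  intros [Hp Huniv] [Hfd Hfc]. split; [exact Hp|].
  destruct (Huniv I f) as (c & [Hcd Hcc] & Hcaus & E).
  - split; [exact Hfd | rewrite tO_unit_r; exact Hfc].
  - rewrite top_unit, tM_id, tO_unit_r. symmetry. now apply comp_id_left.
  - unfold causal in Hcaus. rewrite top_unit, comp_id_left in Hcaus by exact Hcc.
    rewrite <- Hcaus. symmetry. exact E.
Qed.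

Lemma pure_discard a : Pure (to I a) I a (tp a) (id a).
Proof.
  split.
  - split; [rewrite dom_id | rewrite cod_id]; now rewrite tO_unit_l.
  - intros Y g [Hgd Hgc] E. rewrite tO_unit_l in Hgd, Hgc. rewrite tM_unit_l in E.
    exists g. split; [split; assumption|]. split.
    + unfold causal. now rewrite E.
    + rewrite tM_unit_l. symmetry. now apply comp_id_right.
Qed.

Lemma preceq_pure {A0 B0 X f g p} :
  preceq A0 B0 f g -> Pure A0 B0 X g p ->
  exists h, hom h X I /\ f = cp (tm (id B0) h) p.
Proof.
  intros (Y & g0 & f0 & Hg0 & [Hf0d Hf0c] & Ef & Eg) Hp.
  destruct (proj1 Hp) as [Hpd Hpc].
  destruct (pure_universal Hp (conj Hg0 (eq_sym Eg))) as (c & [Hcd Hcc] & Eg0).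
  exists (cp f0 c). split; [split; dcsolve|].
  rewrite Ef, Eg0, comp_assoc, whisker_comp by dcsolve. reflexivity.
Qed.

(* The sequential purification axiom, with its purification rewritten as
   (id (x) G) o (p1 (x) id): a layer applied after p1. *)
Lemma pure_sequential (PP : pseudo_purifiable C) {A1 B1 Cc A2 B2 X1 X2 f1 f2 p1 p2} :
  hom f1 A1 (to B1 Cc) -> hom f2 (to Cc A2) B2 ->
  Pure A1 (to B1 Cc) X1 f1 p1 -> Pure (to Cc A2) B2 X2 f2 p2 ->
  Pure (to A1 A2) (to B1 B2) (to X1 X2)
    (cp (tm (id B1) f2) (tm f1 (id A2)))
    (cp (tm (id B1)
           (cp (tm (id B2) (sg X2 X1)) (cp (tm p2 (id X1)) (tm (id Cc) (sg X1 A2)))))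
        (tm p1 (id A2))).
Proof.
  intros Hf1 Hf2 Hp1 Hp2.
  destruct (proj1 Hp1) as [Hp1d Hp1c]. destruct (proj1 Hp2) as [Hp2d Hp2c].
  pose proof (proj2 PP _ _ _ _ _ _ _ _ _ _ _ Hf1 Hf2 Hp1 Hp2) as H.
  rewrite <- (tM_id C B1 B2), <- (tM_id C B1 Cc), !tM_assoc in H.
  rewrite <- !whisker_comp by dcsolve. rewrite <- !comp_assoc by dcsolve.
  exact H.
Qed.

Lemma pure_tensor_discard (PP : pseudo_purifiable C) {Ah Bh Z fk p} a :
  hom fk Ah Bh -> Pure Ah Bh Z fk p ->
  Pure (to Ah a) Bh (to Z a) (tm fk (tp a)) (tm p (id a)).
Proof.
  intros [Hfd Hfc] Hp. destruct (proj1 Hp) as [Hpd Hpc].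
  assert (Hp' : Pure Ah (to Bh I) Z fk p) by now rewrite tO_unit_r.
  assert (Htop : hom (tp a) (to I a) I) by (split; dcsolve).
  pose proof (pure_sequential PP (B2 := I)
                (conj Hfd (eq_trans Hfc (eq_sym (tO_unit_r C Bh)))) Htop Hp'
                (pure_discard a)) as H.
  rewrite !tM_unit_l, tM_id, (comp_id_left (sg Z a)), sig_inv, tM_id in H by dcsolve.
  rewrite comp_id_left, <- tM_comp, comp_id_left, comp_id_right, tO_unit_r in H
    by dcsolve.
  exact H.
Qed.

Lemma dilation_split (PP : pseudo_purifiable C) {Ah Bh a b N fk fk1 D} :
  hom fk Ah Bh ->
  preceq (to Ah a) Bh (cp (tm (id Bh) (tp b)) fk1) (tm fk (tp a)) ->
  dilation (to Ah a) (to Bh b) N fk1 D ->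
  exists W p1 g, dilation Ah Bh W fk p1 /\ hom g (to W a) (to b N) /\
    D = cp (tm (id Bh) g) (tm p1 (id a)).
Proof.
  intros Hfk Hmon [HD EfD].
  destruct (proj1 PP _ _ _ Hfk) as (Z & p & Hp).
  destruct (pure_dilation Hp Hfk) as [[Hpd Hpc] Efk].
  destruct (preceq_pure Hmon (pure_tensor_discard PP a Hfk Hp)) as (h & [Hhd Hhc] & Eh).
  destruct (proj1 PP _ _ _ (conj Hpd Hpc)) as (X1 & p1 & Hp1).
  destruct (proj1 PP _ _ _ (conj Hhd Hhc)) as (X2 & p2 & Hp2).
  destruct (pure_dilation Hp1 (conj Hpd Hpc)) as [[Hp1d Hp1c] Ep].
  destruct (proj1 Hp2) as [Hp2d Hp2c].
  pose proof (pure_sequential PP (conj Hpd Hpc) (conj Hhd Hhc) Hp1 Hp2) as HQ.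
  rewrite tM_unit_l, tO_unit_r in HQ.
  destruct (pure_universal HQ (dilation_env_tensor HD EfD Eh))
    as (c & [Hcd Hcc] & ED).
  exists (to Z X1), p1,
    (cp c (cp (sg X2 X1) (cp (tm p2 (id X1)) (tm (id Z) (sg X1 a))))).
  split; [exact (dilation_env_tensor (conj Hp1d Hp1c) Ep Efk)|].
  split; [split; dcsolve|].
  rewrite ED, comp_assoc, whisker_comp by dcsolve. reflexivity.
Qed.

Definition splice {X : Type} (s t : nat -> X) (k i : nat) : X :=
  if i <=? k then s i else t i.

Lemma splice_le {X : Type} (s t : nat -> X) k i : i <= k -> splice s t k i = s i.
Proof. intro H. unfold splice. now rewrite (proj2 (Nat.leb_le i k) H). Qed.

Lemma splice_gt {X : Type} (s t : nat -> X) k i : k < i -> splice s t k i = t i.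
Proof. intro H. unfold splice. now rewrite (proj2 (Nat.leb_gt i k) H). Qed.

Section Sequences.
Variables A B : nat -> Ob C.

Lemma phi_seq_ext (M M' : nat -> Ob C) (al al' : nat -> Mor C) m :
  (forall i, i <= S m -> al i = al' i /\ M i = M' i) ->
  phi_seq A B M al m = phi_seq A B M' al' m.
Proof.
  induction m as [|m IH]; intro H; simpl.
  - now destruct (H 1 (le_n _)).
  - rewrite IH by (intros; apply H; lia).
    destruct (H (S (S m)) (le_n _)) as [-> _].
    destruct (H (S m) ltac:(lia)) as [_ ->]. reflexivity.
Qed.

Lemma Phi_ext (M M' : nat -> Ob C) (al al' : nat -> Mor C) k : 1 <= k ->
  (forall i, i <= k -> al i = al' i /\ M i = M' i) ->
  Phi A B M al k = Phi A B M' al' k.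
Proof. intros Hk H. apply phi_seq_ext. intros i Hi. apply H. lia. Qed.

Lemma splice_Phi (M0 Mt : nat -> Ob C) (al0 alt : nat -> Mor C) k j : 1 <= j <= k ->
  Phi A B (splice M0 Mt k) (splice al0 alt k) j = Phi A B M0 al0 j.
Proof.
  intro Hj. apply Phi_ext; [lia|]. intros i Hi.
  rewrite !splice_le by lia. split; reflexivity.
Qed.

Lemma splice_FA (M0 Mt : nat -> Ob C) (al0 alt : nat -> Mor C) k j : 1 <= j <= k ->
  FA A B (splice M0 Mt k) (splice al0 alt k) j = FA A B M0 al0 j.
Proof. intro Hj. unfold FA. now rewrite splice_Phi, splice_le by lia. Qed.

Lemma Phi_succ (M : nat -> Ob C) (al : nat -> Mor C) k g : 1 <= k ->
  al (S k) = cp g (sg (A (S k)) (M k)) ->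
  dom C g = to (M k) (A (S k)) -> cod C (Phi A B M al k) = to (hat B k) (M k) ->
  Phi A B M al (S k) = cp (tm (id (hat B k)) g) (tm (Phi A B M al k) (id (A (S k)))).
Proof.
  intros Hk Hal Hg HPhi. destruct k as [|k]; [lia|].
  unfold Phi in *. replace (S (S k) - 1) with (S k) by lia.
  replace (S k - 1) with k in * by lia.
  simpl phi_seq. rewrite Hal. now apply swap_cancel.
Qed.

End Sequences.

Section Prefix.
Variables (A B : nat -> Ob C) (f : nat -> Mor C).

Definition stateful_upto (k : nat) (M : nat -> Ob C) (al : nat -> Mor C) : Prop :=
  M 0 = I /\
  forall i, 1 <= i <= k -> hom (al i) (to (A i) (M (i - 1))) (to (B i) (M i)).

Definition realizes (k : nat) (N : Ob C) (D : Mor C)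
    (M : nat -> Ob C) (al : nat -> Mor C) : Prop :=
  stateful_upto k M al /\ M k = N /\ Phi A B M al k = D /\
  forall i, 1 <= i <= k -> FA A B M al i = f i.

Lemma realizes_one N D :
  dilation (hat A 1) (hat B 1) N (f 1) D ->
  realizes 1 N D (fun i => match i with 0 => I | _ => N end) (fun _ => D).
Proof.
  intros [[HDd HDc] HD]. simpl in HDd, HDc. rewrite tO_unit_l in HDd, HDc.
  split; [split; [reflexivity|]|split; [reflexivity|split; [reflexivity|]]];
    intros i Hi; replace i with 1 by lia.
  - simpl. rewrite tO_unit_r. split; assumption.
  - exact HD.
Qed.

Lemma realizes_extend k W N p1 g D M0 al0 : 1 <= k ->
  realizes k W p1 M0 al0 -> cod C p1 = to (hat B k) W ->
  hom g (to W (A (S k))) (to (B (S k)) N) ->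
  D = cp (tm (id (hat B k)) g) (tm p1 (id (A (S k)))) ->
  cp (tm (id (hat B (S k))) (tp N)) D = f (S k) ->
  realizes (S k) N D (splice M0 (fun _ => N) k)
    (splice al0 (fun _ => cp g (sg (A (S k)) W)) k).
Proof.
  intros Hk [[HM0 Hal0] [HMk [HPhi HFA]]] Hp1 Hg ED HD.
  assert (HPhiS : Phi A B (splice M0 (fun _ => N) k)
      (splice al0 (fun _ => cp g (sg (A (S k)) W)) k) (S k) = D).
  { assert (HMk' : splice M0 (fun _ => N) k k = W) by (rewrite splice_le; auto).
    assert (HPhik : Phi A B (splice M0 (fun _ => N) k)
        (splice al0 (fun _ => cp g (sg (A (S k)) W)) k) k = p1)
      by (rewrite splice_Phi; auto).
    rewrite (Phi_succ _ _ _ _ _ g Hk); rewrite ?HMk', ?HPhik.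
    - symmetry. exact ED.
    - now rewrite splice_gt by lia.
    - exact (proj1 Hg).
    - exact Hp1. }
  split; [split|split; [|split]].
  - now rewrite splice_le by lia.
  - intros i Hi. destruct (Nat.eq_dec i (S k)) as [->|Hne].
    + replace (S k - 1) with k by lia.
      rewrite (splice_le M0 _ k k), HMk, (splice_gt al0), (splice_gt M0) by lia.
      now apply layer_hom.
    + rewrite !splice_le by lia. apply Hal0. lia.
  - now rewrite splice_gt by lia.
  - exact HPhiS.
  - intros i Hi. destruct (Nat.eq_dec i (S k)) as [->|Hne].
    + unfold FA. now rewrite HPhiS, splice_gt by lia.
    + rewrite splice_FA by lia. apply HFA. lia.
Qed.

Lemma dilation_realization (PP : pseudo_purifiable C) :
  (forall k, 1 <= k -> hom (f k) (hat A k) (hat B k)) -> monotone A B f ->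
  forall k, 1 <= k -> forall N D, dilation (hat A k) (hat B k) N (f k) D ->
  exists M al, realizes k N D M al.
Proof.
  intros Hf Hmon k Hk. induction k as [|k IH]; [lia|]. intros N D HD.
  destruct (Nat.eq_dec k 0) as [->|Hk0]; [eexists; eexists; exact (realizes_one N D HD)|].
  destruct (dilation_split PP (Hf k ltac:(lia)) (Hmon k ltac:(lia)) HD)
    as (W & p1 & g & Hp1 & Hg & ED).
  destruct (IH ltac:(lia) W p1 Hp1) as (M0 & al0 & HR).
  exists (splice M0 (fun _ => N) k), (splice al0 (fun _ => cp g (sg (A (S k)) W)) k).
  exact (realizes_extend k W N p1 g D M0 al0 ltac:(lia) HR (proj2 (proj1 Hp1)) Hg ED
           (proj2 HD)).
Qed.

End Prefix.

Section RegularTail.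
Variables (A B : nat -> Ob C) (n : nat) (A' B' Mr : Ob C) (girr greg : Mor C).
Hypothesis HAB : forall k, n < k -> A k = A' /\ B k = B'.
Hypothesis Hgreg : hom greg (to Mr A') (to B' Mr).

Definition tail_memory (M0 : nat -> Ob C) : nat -> Ob C := splice M0 (fun _ => Mr) n.

Definition tail_layers (al0 : nat -> Mor C) : nat -> Mor C :=
  splice al0 (fun _ => cp greg (sg A' Mr)) n.

Lemma tail_memory_const M0 i : M0 n = Mr -> n <= i -> tail_memory M0 i = Mr.
Proof.
  intros HMn Hi. unfold tail_memory. destruct (Nat.eq_dec i n) as [->|Hne].
  - now rewrite splice_le.
  - now rewrite splice_gt by lia.
Qed.

Lemma psi_cod m : hom girr (hat A n) (to (hat B n) Mr) ->
  cod C (psi_seq A B n girr greg m) = to (hat B (n + m)) Mr.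
Proof.
  intros [_ Hgirr]. destruct Hgreg as [Hgd Hgc].
  induction m as [|m IH]; [now rewrite Nat.add_0_r|].
  destruct (HAB (S (n + m)) ltac:(lia)) as [HA HB].
  simpl psi_seq. rewrite Nat.add_succ_r. simpl hat. rewrite HA, HB.
  dcsolve.
Qed.

Lemma tail_Phi M0 al0 : 1 <= n -> hom girr (hat A n) (to (hat B n) Mr) ->
  M0 n = Mr -> Phi A B M0 al0 n = girr ->
  forall m, Phi A B (tail_memory M0) (tail_layers al0) (n + m) = psi_seq A B n girr greg m.
Proof.
  intros Hn Hgirr HMn HPhin m. induction m as [|m IH].
  - rewrite Nat.add_0_r. unfold tail_memory, tail_layers. now rewrite splice_Phi by lia.
  - destruct (HAB (S (n + m)) ltac:(lia)) as [HA _].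
    assert (HMm : tail_memory M0 (n + m) = Mr) by (apply tail_memory_const; auto; lia).
    rewrite Nat.add_succ_r, (Phi_succ _ _ _ _ _ greg); [now rewrite IH | lia | | |].
    + unfold tail_layers. rewrite splice_gt by lia. now rewrite HMm, HA.
    + rewrite HMm, HA. exact (proj1 Hgreg).
    + rewrite IH, HMm. now apply psi_cod.
Qed.

Lemma tail_stateful M0 al0 : stateful_upto A B n M0 al0 -> M0 n = Mr ->
  stateful A B (tail_memory M0) (tail_layers al0).
Proof.
  intros [HM0 Hal0] HMn. unfold tail_layers. split.
  - unfold tail_memory. now rewrite splice_le by lia.
  - intros i Hi. destruct (Nat.le_gt_cases i n) as [Hle|Hgt].
    + unfold tail_memory. rewrite !splice_le by lia. now apply Hal0.
    + destruct (HAB i Hgt) as [-> ->].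
      rewrite splice_gt, !tail_memory_const by first [exact HMn | lia].
      now apply layer_hom.
Qed.

Lemma tail_regular M0 al0 : M0 n = Mr ->
  regular_stateful A B (tail_memory M0) (tail_layers al0).
Proof.
  intros HMn. exists (S n). split; [lia|]. intros k Hk.
  destruct (HAB k ltac:(lia)) as [-> ->]. destruct (HAB (S n) ltac:(lia)) as [-> ->].
  rewrite !tail_memory_const by first [exact HMn | lia].
  unfold tail_layers. rewrite !splice_gt by lia. repeat split.
Qed.

End RegularTail.
End Realization.

Theorem mainTheorem6 (C : DiscardCat) (A B : nat -> Ob C) (f : nat -> Mor C) :
  pseudo_purifiable C ->
  (forall k, 1 <= k -> hom (f k) (hat A k) (hat B k)) ->
  monotone A B f ->
  regular_seq A B f ->
  exists (M : nat -> Ob C) (alpha : nat -> Mor C),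
    stateful A B M alpha /\ regular_stateful A B M alpha /\
    (forall k, 1 <= k -> FA A B M alpha k = f k).
Proof.
  intros PP Hf Hmon (n & A' & B' & Mr & girr & greg & Hn & HAB & Hgirr & Hgreg & Hreg).
  assert (Hdil : dilation C (hat A n) (hat B n) Mr (f n) girr).
  { split; [exact Hgirr|]. rewrite Hreg, Nat.sub_diag by lia. reflexivity. }
  destruct (dilation_realization C A B f PP Hf Hmon n Hn Mr girr Hdil)
    as (M0 & al0 & Hupto & HMn & HPhin & HFA).
  exists (tail_memory C n Mr M0), (tail_layers C n A' Mr greg al0).
  split; [|split].
  - exact (tail_stateful _ _ _ _ _ _ _ _ HAB Hgreg _ _ Hupto HMn).
  - exact (tail_regular _ _ _ _ _ _ _ _ HAB _ _ HMn).
  - intros k Hk. destruct (Nat.le_gt_cases k n) as [Hle|Hgt].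
    + unfold tail_memory, tail_layers. rewrite splice_FA by lia. apply HFA. lia.
    + unfold FA. replace k with (n + (k - n)) by lia.
      rewrite (tail_Phi _ _ _ _ _ _ _ _ _ HAB Hgreg _ _ Hn Hgirr HMn HPhin).
      rewrite tail_memory_const, Hreg by (auto; lia).
      now replace (n + (k - n) - n) with (k - n) by lia.
Qed.
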